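(* Let $H$ be a quasi-bialgebra, $\mathcal{A}$ an $H$-bimodule algebra, $\mathbb{A}$ an $H$-bicomodule algebra and $F\in H\otimes H$ a gauge transformation. Then the L-R-smash product $\mathcal{A}\natural\mathbb{A}$ (over $H$) and the L-R-smash product ${}_F\mathcal{A}_{F^{-1}}\natural{}^F\mathbb{A}^{F^{-1}}$ (over $H_F$) have the same multiplication on $\mathcal{A}\otimes\mathbb{A}$; i.e. the identity map is an algebra isomorphism.
   Context: Work over a field $k$. $H$ is a quasi-bialgebra $(H,\Delta,\varepsilon,\Phi)$ (unital algebra, algebra maps $\Delta(h)=h_1\otimes h_2$, $\varepsilon$, invertible $\Phi$ with $(id\otimes\Delta)\Delta(h)=\Phi(\Delta\otimes id)\Delta(h)\Phi^{-1}$, counit axioms, pentagon 3-cocycle condition, $(id\otimes\varepsilon\otimes id)\Phi=1\otimes1\otimes1$). $H$-bimodule algebras and $H$-bicomodule algebras $(\mathbb{A},\lambda,\rho,\Phi_\lambda,\Phi_\rho,\Phi_{\lambda,\rho})$ are defined in the sense of Hausser–Nill (algebras in the monoidal category of $H$-bimodules with associator $\Phi\cdot(-)\cdot\Phi^{-1}$; resp. compatible left and right quasi-coactions $\lambda(u)=u_{[-1]}\otimes u_{[0]}$, $\rho(u)=u_{<0>}\otimes u_{<1>}$ with reassociators $\Phi_\lambda\in H\otimes H\otimes\mathbb{A}$, $\Phi_\rho\in\mathbb{A}\otimes H\otimes H$, $\Phi_{\lambda,\rho}\in H\otimes\mathbb{A}\otimes H$). A gauge transformation is an invertible $F=F^1\otimes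 F^2\in H\otimes H$ with $(\varepsilon\otimes id)F=(id\otimes\varepsilon)F=1$; write $F^{-1}=G^1\otimes G^2$. $H_F$ is the quasi-bialgebra with the same algebra and counit, $\Delta_F(h)=F\Delta(h)F^{-1}$, $\Phi_F=(1\otimes F)(id\otimes\Delta)(F)\Phi(\Delta\otimes id)(F^{-1})(F^{-1}\otimes1)$. ${}_F\mathcal{A}_{F^{-1}}$ is $\mathcal{A}$ with the same unit and actions and new product $\varphi\circ\varphi'=(G^1\cdot\varphi\cdot F^1)(G^2\cdot\varphi'\cdot F^2)$; it is an $H_F$-bimodule algebra. ${}^F\mathbb{A}^{F^{-1}}$ is the $H_F$-bicomodule algebra with the same algebra, $\lambda$, $\rho$ and $\Phi_{\lambda,\rho}$, and with reassociators $\Phi_\lambda(F^{-1}\otimes1_{\mathbb{A}})$ and $(1_{\mathbb{A}}\otimes F)\Phi_\rho$. The L-R-smash product over a quasi-bialgebra $H$: $\mathcal{A}\otimes\mathbb{A}$ with product $(\varphi\natural u)(\psi\natural u')=(\tilde{x}^1_{\lambda}\cdot\varphi\cdot\theta^3u'_{<1>}\tilde{x}^2_{\rho})(\tilde{x}^2_{\lambda}u_{[-1]}\theta^1\cdot\psi\cdot\tilde{x}^3_{\rho})\natural\tilde{x}^3_{\lambda}u_{[0]}\theta^2u'_{<0>}\tilde{x}^1_{\rho}$, where $\Phi_\rho^{-1}=\tilde{x}^1_\rho\otimes\tilde{x}^2_\rho\otimes\tilde{x}^3_\rho$, $\Phi_\lambda^{-1}=\tilde{x}^1_\lambda\otimes\tilde{x}^2_\lambda\otimes\tilde{x}^3_\lambda$,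 $\Phi_{\lambda,\rho}^{-1}=\theta^1\otimes\theta^2\otimes\theta^3$. *)

(* Tensor products over the field k are modelled by finite
   lists of simple tensors (representatives); equality in the tensor product
   is tested against linear functionals. *)
From HB Require Import structures.
From mathcomp Require Import all_boot all_order all_algebra.
Set Implicit Arguments. Unset Strict Implicit. Unset Printing Implicit Defensive.
Import GRing.Theory.
Local Open Scope ring_scope.

Section QuasiHopf.
Variable k : fieldType.

Definition islin (V : lmodType k) (f : V -> k) :=
  forall (a : k) (x y : V), f (a *: x + y) = a * f x + f y.

Definition bilinear_map (U V W : lmodType k) (m : U -> V -> W) :=
  (forall (a : k) x y z, m (a *: x + y) z = a *: m x z + m y z) /\
  (forall (a : k) x y z, m z (a *: x + y) = a *: m z x + m z y).

Definition unital_bilinear (V : lmodType k) (m : V -> V -> V) (e : V) :=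
  [/\ bilinear_map m, (forall x, m e x = x) & (forall x, m x e = x)].

Definition is_algebra (V : lmodType k) (m : V -> V -> V) (e : V) :=
  unital_bilinear m e /\ associative m.

Definition bind (X Y : Type) (s : seq X) (f : X -> seq Y) : seq Y :=
  flatten (map f s).

Definition teq2 (U V : lmodType k) (s t : seq (U * V)) :=
  forall (f : U -> k) (g : V -> k), islin f -> islin g ->
    \sum_(p <- s) (f p.1 * g p.2) = \sum_(p <- t) (f p.1 * g p.2).

Definition teq3 (U V W : lmodType k) (s t : seq (U * V * W)) :=
  forall (f : U -> k) (g : V -> k) (h : W -> k), islin f -> islin g -> islin h ->
    \sum_(p <- s) (f p.1.1 * g p.1.2 * h p.2) =
    \sum_(p <- t) (f p.1.1 * g p.1.2 * h p.2).

Definition teq4 (U V W X : lmodType k) (s t : seq (U * V * W * X)) :=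
  forall (f : U -> k) (g : V -> k) (h : W -> k) (l : X -> k),
    islin f -> islin g -> islin h -> islin l ->
    \sum_(p <- s) (f p.1.1.1 * g p.1.1.2 * h p.1.2 * l p.2) =
    \sum_(p <- t) (f p.1.1.1 * g p.1.1.2 * h p.1.2 * l p.2).

Definition sc2 (U V : lmodType k) (a : k) (s : seq (U * V)) :=
  [seq (a *: p.1, p.2) | p <- s].

Definition lin2 (X U V : lmodType k) (D : X -> seq (U * V)) :=
  forall (a : k) (x y : X), teq2 (D (a *: x + y)) (sc2 a (D x) ++ D y).

Definition mul2 (U V : Type) (mU : U -> U -> U) (mV : V -> V -> V)
  (s t : seq (U * V)) : seq (U * V) :=
  [seq (mU p.1 q.1, mV p.2 q.2) | p <- s, q <- t].

Definition mul3 (U V W : Type) (mU : U -> U -> U) (mV : V -> V -> V)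
  (mW : W -> W -> W) (s t : seq (U * V * W)) : seq (U * V * W) :=
  [seq (mU p.1.1 q.1.1, mV p.1.2 q.1.2, mW p.2 q.2) | p <- s, q <- t].

Definition mul4 (U V W X : Type) (mU : U -> U -> U) (mV : V -> V -> V)
  (mW : W -> W -> W) (mX : X -> X -> X) (s t : seq (U * V * W * X))
  : seq (U * V * W * X) :=
  [seq (mU p.1.1.1 q.1.1.1, mV p.1.1.2 q.1.1.2, mW p.1.2 q.1.2, mX p.2 q.2)
  | p <- s, q <- t].

Definition ap2_1 (X U V W : Type) (D : X -> seq (U * V)) (s : seq (X * W))
  : seq (U * V * W) := bind s (fun p => [seq (q.1, q.2, p.2) | q <- D p.1]).
Definition ap2_2 (W X U V : Type) (D : X -> seq (U * V)) (s : seq (W * X))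
  : seq (W * U * V) := bind s (fun p => [seq (p.1, q.1, q.2) | q <- D p.2]).
Definition ap3_1 (X U V W1 W2 : Type) (D : X -> seq (U * V))
  (s : seq (X * W1 * W2)) : seq (U * V * W1 * W2) :=
  bind s (fun p => [seq (q.1, q.2, p.1.2, p.2) | q <- D p.1.1]).
Definition ap3_2 (W1 X U V W2 : Type) (D : X -> seq (U * V))
  (s : seq (W1 * X * W2)) : seq (W1 * U * V * W2) :=
  bind s (fun p => [seq (p.1.1, q.1, q.2, p.2) | q <- D p.1.2]).
Definition ap3_3 (W1 W2 X U V : Type) (D : X -> seq (U * V))
  (s : seq (W1 * W2 * X)) : seq (W1 * W2 * U * V) :=
  bind s (fun p => [seq (p.1.1, p.1.2, q.1, q.2) | q <- D p.2]).

Definition lift2_l (E U V : Type) (e : E) (s : seq (U * V)) : seq (E * U * V) :=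
  [seq (e, p.1, p.2) | p <- s].
Definition lift2_r (E U V : Type) (e : E) (s : seq (U * V)) : seq (U * V * E) :=
  [seq (p.1, p.2, e) | p <- s].
Definition lift3_l (E U V W : Type) (e : E) (s : seq (U * V * W))
  : seq (E * U * V * W) := [seq (e, p.1.1, p.1.2, p.2) | p <- s].
Definition lift3_r (E U V W : Type) (e : E) (s : seq (U * V * W))
  : seq (U * V * W * E) := [seq (p.1.1, p.1.2, p.2, e) | p <- s].

Record quasi_bialgebra (H : lmodType k) (mH : H -> H -> H) (eH : H)
  (D : H -> seq (H * H)) (eps : H -> k) (Phi Phii : seq (H * H * H)) : Prop := {
  qb_alg : is_algebra mH eH;
  qb_D_lin : lin2 D;
  qb_D_mul : forall x y, teq2 (D (mH x y)) (mul2 mH mH (D x) (D y));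
  qb_D_one : teq2 (D eH) [:: (eH, eH)];
  qb_eps_lin : islin eps;
  qb_eps_mul : forall x y, eps (mH x y) = eps x * eps y;
  qb_eps_one : eps eH = 1;
  qb_Phi_inv_r : teq3 (mul3 mH mH mH Phi Phii) [:: (eH, eH, eH)];
  qb_Phi_inv_l : teq3 (mul3 mH mH mH Phii Phi) [:: (eH, eH, eH)];
  (* (id (x) Delta) Delta(h) = Phi (Delta (x) id) Delta(h) Phi^-1 *)
  qb_coassoc : forall h, teq3 (ap2_2 D (D h))
      (mul3 mH mH mH (mul3 mH mH mH Phi (ap2_1 D (D h))) Phii);
  qb_counit_l : forall h, \sum_(p <- D h) (eps p.1 *: p.2) = h;
  qb_counit_r : forall h, \sum_(p <- D h) (eps p.2 *: p.1) = h;
  (* (1 (x) Phi)(id (x) Delta (x) id)(Phi)(Phi (x) 1)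
       = (id (x) id (x) Delta)(Phi)(Delta (x) id (x) id)(Phi) *)
  qb_pentagon : teq4
      (mul4 mH mH mH mH (mul4 mH mH mH mH (lift3_l eH Phi) (ap3_2 D Phi))
            (lift3_r eH Phi))
      (mul4 mH mH mH mH (ap3_3 D Phi) (ap3_1 D Phi));
  qb_Phi_eps : teq2 [seq (p.1.1, eps p.1.2 *: p.2) | p <- Phi] [:: (eH, eH)]
}.

Record gauge_transformation (H : lmodType k) (mH : H -> H -> H) (eH : H)
  (eps : H -> k) (F Fi : seq (H * H)) : Prop := {
  gt_inv_r : teq2 (mul2 mH mH F Fi) [:: (eH, eH)];
  gt_inv_l : teq2 (mul2 mH mH Fi F) [:: (eH, eH)];
  gt_eps_l : \sum_(p <- F) (eps p.1 *: p.2) = eH;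
  gt_eps_r : \sum_(p <- F) (eps p.2 *: p.1) = eH
}.

Record bimodule_algebra (H : lmodType k) (mH : H -> H -> H) (eH : H)
  (D : H -> seq (H * H)) (eps : H -> k) (Phi Phii : seq (H * H * H))
  (A : lmodType k) (mA : A -> A -> A) (eA : A)
  (actL : H -> A -> A) (actR : A -> H -> A) : Prop := {
  ba_unital : unital_bilinear mA eA;
  ba_actL_bil : bilinear_map actL;
  ba_actR_bil : bilinear_map actR;
  ba_actL_mul : forall h h' x, actL (mH h h') x = actL h (actL h' x);
  ba_actL_one : forall x, actL eH x = x;
  ba_actR_mul : forall h h' x, actR x (mH h h') = actR (actR x h) h';
  ba_actR_one : forall x, actR x eH = x;
  ba_act_comm : forall h h' x, actR (actL h x) h' = actL h (actR x h');
  ba_mul_L : forall h x y,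
      actL h (mA x y) = \sum_(p <- D h) mA (actL p.1 x) (actL p.2 y);
  ba_mul_R : forall h x y,
      actR (mA x y) h = \sum_(p <- D h) mA (actR x p.1) (actR y p.2);
  ba_one_L : forall h, actL h eA = eps h *: eA;
  ba_one_R : forall h, actR eA h = eps h *: eA;
  ba_qassoc : forall x y z, mA (mA x y) z =
      \sum_(X <- Phi) \sum_(Y <- Phii)
        mA (actL X.1.1 (actR x Y.1.1))
           (mA (actL X.1.2 (actR y Y.1.2)) (actL X.2 (actR z Y.2)))
}.

Record bicomodule_algebra (H : lmodType k) (mH : H -> H -> H) (eH : H)
  (D : H -> seq (H * H)) (eps : H -> k) (Phi : seq (H * H * H))
  (B : lmodType k) (mB : B -> B -> B) (eB : B)
  (lam : B -> seq (H * B)) (rho : B -> seq (B * H))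
  (Pl Pli : seq (H * H * B)) (Pr Pri : seq (B * H * H))
  (Plr Plri : seq (H * B * H)) : Prop := {
  bc_alg : is_algebra mB eB;
  bc_lam_lin : lin2 lam;
  bc_lam_mul : forall x y, teq2 (lam (mB x y)) (mul2 mH mB (lam x) (lam y));
  bc_lam_one : teq2 (lam eB) [:: (eH, eB)];
  bc_Pl_inv_r : teq3 (mul3 mH mH mB Pl Pli) [:: (eH, eH, eB)];
  bc_Pl_inv_l : teq3 (mul3 mH mH mB Pli Pl) [:: (eH, eH, eB)];
  bc_lam_coassoc : forall u, teq3 (mul3 mH mH mB (ap2_2 lam (lam u)) Pl)
                                  (mul3 mH mH mB Pl (ap2_1 D (lam u)));
  bc_lam_pentagon : teq4
      (mul4 mH mH mH mB (mul4 mH mH mH mB (lift3_l eH Pl) (ap3_2 D Pl))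
            (lift3_r eB Phi))
      (mul4 mH mH mH mB (ap3_3 lam Pl) (ap3_1 D Pl));
  bc_lam_counit : forall u, \sum_(p <- lam u) (eps p.1 *: p.2) = u;
  bc_Pl_eps : teq2 [seq (p.1.1, eps p.1.2 *: p.2) | p <- Pl] [:: (eH, eB)];
  bc_rho_lin : lin2 rho;
  bc_rho_mul : forall x y, teq2 (rho (mB x y)) (mul2 mB mH (rho x) (rho y));
  bc_rho_one : teq2 (rho eB) [:: (eB, eH)];
  bc_Pr_inv_r : teq3 (mul3 mB mH mH Pr Pri) [:: (eB, eH, eH)];
  bc_Pr_inv_l : teq3 (mul3 mB mH mH Pri Pr) [:: (eB, eH, eH)];
  bc_rho_coassoc : forall u, teq3 (mul3 mB mH mH Pr (ap2_1 rho (rho u)))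
                                  (mul3 mB mH mH (ap2_2 D (rho u)) Pr);
  bc_rho_pentagon : teq4
      (mul4 mB mH mH mH (mul4 mB mH mH mH (lift3_l eB Phi) (ap3_2 D Pr))
            (lift3_r eH Pr))
      (mul4 mB mH mH mH (ap3_3 D Pr) (ap3_1 rho Pr));
  bc_rho_counit : forall u, \sum_(p <- rho u) (eps p.2 *: p.1) = u;
  bc_Pr_eps : teq2 [seq (p.1.1, eps p.1.2 *: p.2) | p <- Pr] [:: (eB, eH)];
  bc_Plr_inv_r : teq3 (mul3 mH mB mH Plr Plri) [:: (eH, eB, eH)];
  bc_Plr_inv_l : teq3 (mul3 mH mB mH Plri Plr) [:: (eH, eB, eH)];
  bc_lr : forall u, teq3 (ap2_2 rho (lam u))
      (mul3 mH mB mH (mul3 mH mB mH Plr (ap2_1 lam (rho u))) Plri);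
  (* (1 (x) Plr)(id (x) lam (x) id)(Plr)(Pl (x) 1)
       = (id (x) id (x) rho)(Pl)(Delta (x) id (x) id)(Plr) *)
  bc_lr_pent1 : teq4
      (mul4 mH mH mB mH (mul4 mH mH mB mH (lift3_l eH Plr) (ap3_2 lam Plr))
            (lift3_r eH Pl))
      (mul4 mH mH mB mH (ap3_3 rho Pl) (ap3_1 D Plr));
  (* (1 (x) Pr)(id (x) rho (x) id)(Plr)(Plr (x) 1)
       = (id (x) id (x) Delta)(Plr)(lam (x) id (x) id)(Pr) *)
  bc_lr_pent2 : teq4
      (mul4 mH mB mH mH (mul4 mH mB mH mH (lift3_l eH Pr) (ap3_2 rho Plr))
            (lift3_r eH Plr))
      (mul4 mH mB mH mH (ap3_3 D Plr) (ap3_1 lam Pr))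
}.

Definition twist_mul (H A : lmodType k) (mA : A -> A -> A)
  (actL : H -> A -> A) (actR : A -> H -> A) (F Fi : seq (H * H)) (x y : A) : A :=
  \sum_(g <- Fi) \sum_(f <- F) mA (actL g.1 (actR x f.1)) (actL g.2 (actR y f.2)).

(* (phi # u)(psi # u') =
   (xl1.phi.th3 u'<1> xr2)(xl2 u[-1] th1.psi.xr3) # xl3 u[0] th2 u'<0> xr1
   with Pli = Phi_lambda^-1, Pri = Phi_rho^-1, Plri = Phi_{lambda,rho}^-1 *)
Definition smash1 (H A B : lmodType k) (mH : H -> H -> H) (mB : B -> B -> B)
  (actL : H -> A -> A) (actR : A -> H -> A)
  (lam : B -> seq (H * B)) (rho : B -> seq (B * H)) (Plri : seq (H * B * H))
  (mA : A -> A -> A) (Pli : seq (H * H * B)) (Pri : seq (B * H * H))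
  (phi : A) (u : B) (psi : A) (u' : B) : seq (A * B) :=
  bind Pli (fun xl => bind (lam u) (fun l => bind Plri (fun th =>
  bind (rho u') (fun r => [seq
    (mA (actL xl.1.1 (actR phi (mH (mH th.2 r.2) xr.1.2)))
        (actL (mH (mH xl.1.2 l.1) th.1.1) (actR psi xr.2)),
     mB (mB (mB (mB xl.2 l.2) th.1.2) r.1) xr.1.1) | xr <- Pri])))).

Definition smash (H A B : lmodType k) (mH : H -> H -> H) (mB : B -> B -> B)
  (actL : H -> A -> A) (actR : A -> H -> A)
  (lam : B -> seq (H * B)) (rho : B -> seq (B * H)) (Plri : seq (H * B * H))
  (mA : A -> A -> A) (Pli : seq (H * H * B)) (Pri : seq (B * H * H))
  (s t : seq (A * B)) : seq (A * B) :=
  bind s (fun p => bind t (fun q =>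
    smash1 mH mB actL actR lam rho Plri mA Pli Pri p.1 p.2 q.1 q.2)).

End QuasiHopf.

(** The gauge-twisted reassociators are Phi_lambda (F^-1 (x) 1) and
  (1 (x) F) Phi_rho, so by uniqueness of inverses their inverses are
  (F (x) 1) Phi_lambda^-1 and Phi_rho^-1 (1 (x) F^-1); equivalently
  Phi_lambda^-1 = (F^-1 (x) 1) PlFi and Phi_rho^-1 = PrFi (1 (x) F).
  Substituting this into the smash product over H, the extra factors F^-1 on
  the left and F on the right are exactly the G^i and F^i of the twisted
  product of _F A _{F^-1}, once the bimodule axioms merge them into the
  actions.

  Tensors are lists of simple tensors compared against products of linear
  functionals, so equalities of tensors must first be extended to arbitrary
  trilinear forms: on the finite-dimensional span of the factors occurring
  there is a finite family of global functionals reproducing every vector,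
  built from the existence (by Zorn's lemma) of a functional taking the
  value 1 at any given nonzero vector. *)

From HB Require Import structures.
From mathcomp Require Import all_boot all_order all_algebra.
From mathcomp Require Import boolp classical_sets.
From Pilot Require Import Defs.
Set Implicit Arguments. Unset Strict Implicit. Unset Printing Implicit Defensive.
Import GRing.Theory.
Local Open Scope ring_scope.
Local Open Scope classical_set_scope.

Section Linearity.
Variable k : fieldType.

Lemma islin_comp (X Y : lmodType k) (f : Y -> k) (m : X -> Y) :
  islin f -> linear m -> islin (fun x => f (m x)).
Proof. by move=> hf hm a x y; rewrite hm hf. Qed.

Lemma linear_bilinear_l (X Y Z T : lmodType k) (m : X -> Y -> Z) (n : T -> X) y :
  bilinear_map m -> linear n -> linear (fun t => m (n t) y).
Proof. by case=> m1 _ hn a t t'; rewrite hn m1. Qed.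

Lemma linear_bilinear_r (X Y Z T : lmodType k) (m : X -> Y -> Z) (n : T -> Y) x :
  bilinear_map m -> linear n -> linear (fun t => m x (n t)).
Proof. by case=> _ m2 hn a t t'; rewrite hn m2. Qed.

Lemma islin_mulr (X : lmodType k) (h : X -> k) c : islin h -> islin (fun x => h x * c).
Proof. by move=> hh a x y; rewrite hh mulrDl mulrA. Qed.

Lemma islin_mull (X : lmodType k) (h : X -> k) c : islin h -> islin (fun x => c * h x).
Proof. by move=> hh a x y; rewrite hh mulrDr mulrCA. Qed.

End Linearity.

Section LinearFunctionals.
Variables (k : fieldType) (U : lmodType k).
Implicit Types (f : U -> k).

Lemma islinZ f : islin f -> forall a x, f (a *: x) = a * f x.
Proof. exact: (@scalable_linear _ _ _ *%R). Qed.

Lemma islinD f : islin f -> forall x y, f (x + y) = f x + f y.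
Proof. by move=> hf x y; rewrite -[x]scale1r hf mul1r scale1r. Qed.

Lemma islin0 f : islin f -> f 0 = 0.
Proof. by move=> hf; rewrite -(scale0r 0) islinZ // mul0r. Qed.

Lemma islin_sum f I (r : seq I) (F : I -> U) : islin f ->
  f (\sum_(i <- r) F i) = \sum_(i <- r) f (F i).
Proof. by move=> hf; apply: big_morph; [exact: islinD | exact: islin0]. Qed.

Lemma islin_sum_fun I (r : seq I) (F : I -> U -> k) :
  (forall i, islin (F i)) -> islin (fun x => \sum_(i <- r) F i x).
Proof.
move=> hF a x y; rewrite (eq_bigr _ (fun i _ => hF i a x y)).
by rewrite big_split /= mulr_sumr.
Qed.

Section Extension.
Variable r : U.

Definition linear_graph (G : set (U * k)) :=
  [/\ (forall x a b, G (x, a) -> G (x, b) -> a = b),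
      (forall c x y a b, G (x, a) -> G (y, b) -> G (c *: x + y, c * a + b)) &
      G (r, 1)].

Lemma linear_graph0 G : linear_graph G -> G (0, 0).
Proof.
by case=> _ lin Gr; have := lin (-1) _ _ _ _ Gr Gr; rewrite scaleN1r addNr mulN1r addNr.
Qed.

Lemma linear_graph_line : r != 0 -> linear_graph [set (c *: r, c) | c in setT].
Proof.
move=> rn0; split.
- move=> x a b [c _ [<- <-]] [c' _ [/eqP + <-]].
  by rewrite -subr_eq0 -scalerBl scaler_eq0 (negbTE rn0) orbF subr_eq0 => /eqP.
- move=> c x y a b [c1 _ [<- <-]] [c2 _ [<- <-]].
  by exists (c * c1 + c2); rewrite // scalerDl scalerA.
- by exists 1; rewrite ?scale1r.
Qed.

Lemma linear_graph_bigcup (F : set (set (U * k))) :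
  F `<=` (fun G => G = set0 \/ linear_graph G) -> total_on F subset ->
  \bigcup_(G in F) G = set0 \/ linear_graph (\bigcup_(G in F) G).
Proof.
move=> FP Ftot; have [->|/eqP/set0P [p [G0 FG0 G0p]]] := EM (\bigcup_(G in F) G = set0).
  by left.
right; have lgF X p' : F X -> X p' -> linear_graph X.
  by move=> FX Xp'; case: (FP X FX) => // X0; rewrite X0 in Xp'.
split.
- move=> x a b [X FX Xa] [Y FY Yb].
  have [XY|YX] := Ftot X Y FX FY.
    by case: (lgF Y _ FY Yb) => fY _ _; exact: fY (XY _ Xa) Yb.
  by case: (lgF X _ FX Xa) => fX _ _; exact: fX Xa (YX _ Yb).
- move=> c x y a b [X FX Xa] [Y FY Yb].
  have [XY|YX] := Ftot X Y FX FY.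
    by exists Y => //; case: (lgF Y _ FY Yb) => _ cY _; exact: cY (XY _ Xa) Yb.
  by exists X => //; case: (lgF X _ FX Xa) => _ cX _; exact: cX Xa (YX _ Yb).
- by exists G0 => //; case: (lgF G0 _ FG0 G0p).
Qed.

Definition graph_adjoin (G : set (U * k)) (x : U) : set (U * k) :=
  [set p | exists d a c, G (d, a) /\ p = (d + c *: x, a)].

Lemma linear_graph_adjoin G x : linear_graph G -> ~ (exists a, G (x, a)) ->
  linear_graph (graph_adjoin G x).
Proof.
move=> lgG nGx; have G00 := linear_graph0 lgG; case: lgG => fG cG Gr; split.
- move=> y a b [d [a1 [c [Gd [-> ->]]]]] [d' [a2 [c' [Gd' [e ->]]]]].
  have [cc'|cc'] := eqVneq c c'.
    by move: e; rewrite cc' => /addIr ed; rewrite ed in Gd; exact: fG Gd Gd'.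
  exfalso; apply: nGx; exists ((c - c')^-1 * (-1 * a1 + a2)).
  suff -> : x = (c - c')^-1 *: (-1 *: d + d').
    by have := cG (c - c')^-1 _ _ _ _ (cG (-1) _ _ _ _ Gd Gd') G00; rewrite !addr0.
  apply: (@scalerI _ _ (c - c')); first by rewrite subr_eq0.
  rewrite scalerA mulfV ?subr_eq0 // scale1r scaleN1r scalerBl.
  by rewrite -[d'](addrK (c' *: x)) -e addrA addKr.
- move=> e y z a b [d [a1 [c1 [Gd [-> ->]]]]] [d' [a2 [c2 [Gd' [-> ->]]]]].
  exists (e *: d + d'), (e * a1 + a2), (e * c1 + c2); split; first exact: cG.
  by rewrite scalerDr scalerDl scalerA addrACA.
- by exists r, 1, 0; rewrite scale0r addr0.
Qed.

Lemma exists_islin_one : r != 0 -> exists g : U -> k, islin g /\ g r = 1.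
Proof.
move=> rn0.
(* [set0] is admitted because it is the union of the empty chain. *)
have [G [PG Gmax]] := Zorn_bigcup (P := fun G => G = set0 \/ linear_graph G)
  linear_graph_bigcup.
have lgG : linear_graph G.
  case: PG => // G0; exfalso; apply: (Gmax _ _ (or_intror (linear_graph_line rn0))).
  by rewrite G0; split => // /(_ (r, 1)) []; exists 1; rewrite ?scale1r.
have tot x : exists a, G (x, a).
  apply: contrapT => nGx; apply: (Gmax _ _ (or_intror (linear_graph_adjoin lgG nGx))).
  split; first by move=> [d a] Gda; exists d, a, 0; rewrite scale0r addr0.
  move=> /(_ (x, 0)) Gx0; apply: nGx; exists 0; apply: Gx0.
  by exists 0, 0, 1; rewrite scale1r add0r; split=> //; exact: linear_graph0.
have [g Gg] := choice tot; case: lgG => fG cG Gr.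
by exists g; split=> [a x y|]; [apply: fG (Gg _) _; apply: cG | exact: fG (Gg r) Gr].
Qed.

End Extension.
End LinearFunctionals.

Section FiniteRank.
Variables (k : fieldType) (U : lmodType k).

Definition functional := {f : U -> k | islin f}.

Definition finrank (cb : seq (functional * U)) (x : U) : U :=
  \sum_(p <- cb) sval p.1 x *: p.2.

Lemma finrank_linear cb : linear (finrank cb).
Proof.
move=> a x y; rewrite /finrank scaler_sumr -big_split; apply: eq_bigr => p _ /=.
by rewrite (svalP p.1) scalerDl scalerA.
Qed.

Lemma islin_finrank (f : U -> k) cb x : islin f ->
  f (finrank cb x) = \sum_(p <- cb) sval p.1 x * f p.2.
Proof. by move=> hf; rewrite islin_sum //; apply: eq_bigr => p _; rewrite islinZ. Qed.

Lemma exists_finrank_id (us : seq U) :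
  exists cb, {in us, forall u, finrank cb u = u}.
Proof.
elim: us => [|u us [cb Pcb]]; first by exists [::].
have [Pu|Pun] := eqVneq (u - finrank cb u) 0.
  exists cb => v; rewrite inE => /predU1P[->|]; last exact: Pcb.
  by apply/eqP; rewrite eq_sym -subr_eq0 Pu.
have [g [lg gPu]] := exists_islin_one Pun.
have lg' : islin (fun x => g (x - finrank cb x)).
  by move=> a x y; rewrite finrank_linear -lg scalerBr opprD addrACA.
exists ((exist _ _ lg', u - finrank cb u) :: cb) => v.
rewrite /finrank big_cons /= -/(finrank cb v) inE => /predU1P[->|vus].
  by rewrite gPu scale1r subrK.
by rewrite Pcb // subrr islin0 // scale0r add0r.
Qed.

End FiniteRank.

Section Tensor3.
Variables (k : fieldType) (U V W : lmodType k).

Definition trilinear (G : U -> V -> W -> k) :=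
  [/\ forall y z, islin (fun x => G x y z), forall x z, islin (fun y => G x y z)
    & forall x y, islin (G x y)].

Definition pair3 (s : seq (U * V * W)) (G : U -> V -> W -> k) : k :=
  \sum_(p <- s) G p.1.1 p.1.2 p.2.

Definition prod3 (f : U -> k) (g : V -> k) (h : W -> k) a b c := f a * g b * h c.

Lemma trilinear_prod3 f g h :
  islin f -> islin g -> islin h -> trilinear (prod3 f g h).
Proof.
move=> hf hg hh; split=> *.
- by move=> ? ? ?; rewrite /prod3 hf !mulrDl !mulrA.
- by move=> ? ? ?; rewrite /prod3 hg mulrDr mulrDl !mulrA [f _ * _]mulrC.
- by move=> ? ? ?; rewrite /prod3 hh mulrDr mulrCA.
Qed.

Lemma pair3_finrank cb1 cb2 s G : trilinear G ->
  {in s, forall p, finrank cb1 p.1.1 = p.1.1 /\ finrank cb2 p.1.2 = p.1.2} ->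
  pair3 s G = \sum_(q1 <- cb1) \sum_(q2 <- cb2)
    pair3 s (fun a b c => sval q1.1 a * sval q2.1 b * G q1.2 q2.2 c).
Proof.
move=> [G1 G2 _] hs; rewrite /pair3 (eq_big_seq (fun p => \sum_(q1 <- cb1)
    \sum_(q2 <- cb2) sval q1.1 p.1.1 * sval q2.1 p.1.2 * G q1.2 q2.2 p.2)).
  by rewrite exchange_big; apply: eq_bigr => q1 _; rewrite exchange_big.
move=> [[a b] c] /hs /= [Pa Pb].
rewrite -{1}Pa (islin_finrank _ _ (G1 b c)); apply: eq_bigr => q1 _.
rewrite -{1}Pb (islin_finrank _ _ (G2 _ c)) mulr_sumr.
by apply: eq_bigr => q2 _; rewrite mulrA.
Qed.

Lemma teq3_trilinear s t G : teq3 s t -> trilinear G -> pair3 s G = pair3 t G.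
Proof.
move=> hst hG.
have [cb1 P1] := exists_finrank_id [seq p.1.1 | p <- s ++ t].
have [cb2 P2] := exists_finrank_id [seq p.1.2 | p <- s ++ t].
have Pst (r : seq (U * V * W)) : {subset r <= s ++ t} ->
    {in r, forall p, finrank cb1 p.1.1 = p.1.1 /\ finrank cb2 p.1.2 = p.1.2}.
  by move=> rst p /rst pst; split; [apply: P1 | apply: P2]; apply: map_f.
rewrite (pair3_finrank hG (Pst s _)) => [|p ps]; last by rewrite mem_cat ps.
rewrite (pair3_finrank hG (Pst t _)) => [|p pt]; last by rewrite mem_cat pt orbT.
apply: eq_bigr => q1 _; apply: eq_bigr => q2 _; case: hG => _ _ G3.
exact: hst (svalP q1.1) (svalP q2.1) (G3 q1.2 q2.2).
Qed.

Lemma trilinear_sum I (r : seq I) (G : I -> U -> V -> W -> k) :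
  (forall i, trilinear (G i)) -> trilinear (fun a b c => \sum_(i <- r) G i a b c).
Proof.
by move=> hG; split=> *; apply: islin_sum_fun => i; case: (hG i).
Qed.

End Tensor3.

Lemma pair3_lift2_r (k : fieldType) (U V W : lmodType k) (e : W) (s : seq (U * V)) G :
  pair3 (lift2_r e s) G = \sum_(p <- s) G p.1 p.2 e.
Proof. exact: big_map. Qed.

Section TensorAlgebra3.
Variables (k : fieldType) (U V W : lmodType k).
Variables (mU : U -> U -> U) (mV : V -> V -> V) (mW : W -> W -> W).
Variables (eU : U) (eV : V) (eW : W).
Hypotheses (algU : is_algebra mU eU) (algV : is_algebra mV eV)
  (algW : is_algebra mW eW).

Local Notation mul3 := (mul3 mU mV mW).
Local Notation one3 := [:: (eU, eV, eW)].

Lemma mul3A s t r : mul3 (mul3 s t) r = mul3 s (mul3 t r).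
Proof.
have [_ aU] := algU; have [_ aV] := algV; have [_ aW] := algW.
have mul3_cat s1 s2 t' : mul3 (s1 ++ s2) t' = mul3 s1 t' ++ mul3 s2 t'.
  exact: allpairs_cat.
elim: s => //= p s IH; rewrite [mul3 (p :: s) _]allpairs_cons.
rewrite mul3_cat IH [mul3 (p :: s) _]allpairs_cons; congr (_ ++ _).
rewrite /Defs.mul3 allpairs_mapl map_allpairs; apply: eq_allpairs => q x /=.
by rewrite aU aV aW.
Qed.

Lemma mul3_1 s : mul3 s one3 = s.
Proof.
have [[_ _ uU] _] := algU; have [[_ _ uV] _] := algV; have [[_ _ uW] _] := algW.
by rewrite /mul3 allpairs1r; elim: s => //= -[[a b] c] s ->; rewrite uU uV uW.
Qed.

Lemma mul1_3 s : mul3 one3 s = s.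
Proof.
have [[_ uU _] _] := algU; have [[_ uV _] _] := algV; have [[_ uW _] _] := algW.
by rewrite /mul3 allpairs1l; elim: s => //= -[[a b] c] s ->; rewrite uU uV uW.
Qed.

Lemma pair3_mul3 s t G : pair3 (mul3 s t) G =
  pair3 s (fun a b c => pair3 t (fun a' b' c' => G (mU a a') (mV b b') (mW c c'))).
Proof. exact: big_allpairs_dep. Qed.

Lemma trilinear_mul3l t G : trilinear G ->
  trilinear (fun a b c => pair3 t (fun a' b' c' => G (mU a a') (mV b b') (mW c c'))).
Proof.
have [[[bU _] _ _] _] := algU; have [[[bV _] _ _] _] := algV.
have [[[bW _] _ _] _] := algW.
by case=> G1 G2 G3; split=> *; apply: islin_sum_fun => q a x y;
  rewrite ?bU ?bV ?bW ?G1 ?G2 ?G3.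
Qed.

Lemma trilinear_mul3r a b c G : trilinear G ->
  trilinear (fun a' b' c' => G (mU a a') (mV b b') (mW c c')).
Proof.
have [[[_ bU] _ _] _] := algU; have [[[_ bV] _ _] _] := algV.
have [[[_ bW] _ _] _] := algW.
by case=> G1 G2 G3; split=> * ? ? ?; rewrite ?bU ?bV ?bW ?G1 ?G2 ?G3.
Qed.

Lemma teq3_mul3l s t r : teq3 s t -> teq3 (mul3 s r) (mul3 t r).
Proof.
move=> hst f g h hf hg hh.
rewrite -[LHS]/(pair3 _ (prod3 f g h)) -[RHS]/(pair3 _ (prod3 f g h)) !pair3_mul3.
exact/teq3_trilinear/trilinear_mul3l/trilinear_prod3.
Qed.

Lemma teq3_mul3r s t r : teq3 s t -> teq3 (mul3 r s) (mul3 r t).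
Proof.
move=> hst f g h hf hg hh.
rewrite -[LHS]/(pair3 _ (prod3 f g h)) -[RHS]/(pair3 _ (prod3 f g h)) !pair3_mul3.
by apply: eq_bigr => p _; exact/teq3_trilinear/trilinear_mul3r/trilinear_prod3.
Qed.

Lemma teq3_inv_unique s t Z :
  teq3 (mul3 s t) one3 -> teq3 (mul3 t Z) one3 -> teq3 s Z.
Proof.
move=> hst htZ f g h hf hg hh.
have := teq3_mul3r s htZ hf hg hh; rewrite mul3_1 -mul3A => <-.
by have := teq3_mul3l Z hst hf hg hh; rewrite mul1_3.
Qed.

End TensorAlgebra3.

Lemma big_bind (k : fieldType) (X Y : Type) (s : seq X) (F : X -> seq Y) (G : Y -> k) :
  \sum_(p <- bind s F) G p = \sum_(x <- s) \sum_(p <- F x) G p.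
Proof. by rewrite big_flatten big_map. Qed.

Lemma teq2_bind (k : fieldType) (X : Type) (U V : lmodType k) (s : seq X)
    (F G : X -> seq (U * V)) :
  (forall x, teq2 (F x) (G x)) -> teq2 (bind s F) (bind s G).
Proof. by move=> FG f g hf hg; rewrite !big_bind; apply: eq_bigr => x _; apply: FG. Qed.

Section SmashGauge.
Variables (k : fieldType) (H A B : lmodType k).
Variables (mH : H -> H -> H) (mA : A -> A -> A) (mB : B -> B -> B) (eB : B).
Variables (actL : H -> A -> A) (actR : A -> H -> A).
Variables (lam : B -> seq (H * B)) (rho : B -> seq (B * H)).
Variables (Pli PlFi : seq (H * H * B)) (Pri PrFi : seq (B * H * H)).
Variables (Plri : seq (H * B * H)) (F Fi : seq (H * H)).
Hypotheses (bH : bilinear_map mH) (bA : bilinear_map mA) (bB : bilinear_map mB).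
Hypotheses (bL : bilinear_map actL) (bR : bilinear_map actR).
Hypotheses (aH : associative mH) (uBl : left_id eB mB) (uBr : right_id eB mB).
Hypothesis actL_mul : forall h h' x, actL (mH h h') x = actL h (actL h' x).
Hypothesis actR_mul : forall h h' x, actR x (mH h h') = actR (actR x h) h'.
Hypothesis act_comm : forall h h' x, actR (actL h x) h' = actL h (actR x h').
Hypothesis PliE : teq3 Pli (mul3 mH mH mB (lift2_r eB Fi) PlFi).
Hypothesis PriE : teq3 (mul3 mB mH mH PrFi (lift2_l eB F)) Pri.
Variables (f : A -> k) (g : B -> k) (phi psi : A) (u u' : B).
Hypotheses (hf : islin f) (hg : islin g).

(* [(a1, a2, b)] and [(c, h1, h2)] are the legs of x_lambda^-1 and x_rho^-1;
   [l], [th], [r] are u_[-1] (x) u_[0], theta and u'_<0> (x) u'_<1>. *)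
Definition smash_kernel (mA' : A -> A -> A) (a1 a2 : H) (b : B)
    (l : H * B) (th : H * B * H) (r : B * H) (c : B) (h1 h2 : H) : k :=
  f (mA' (actL a1 (actR phi (mH (mH th.2 r.2) h1)))
         (actL (mH (mH a2 l.1) th.1.1) (actR psi h2))) *
  g (mB (mB (mB (mB b l.2) th.1.2) r.1) c).

Lemma smash1_pair3 mA' Pli' Pri' :
  \sum_(p <- smash1 mH mB actL actR lam rho Plri mA' Pli' Pri' phi u psi u')
     f p.1 * g p.2 =
  pair3 Pli' (fun a1 a2 b => \sum_(l <- lam u) \sum_(th <- Plri)
    \sum_(r <- rho u') pair3 Pri' (smash_kernel mA' a1 a2 b l th r)).
Proof.
rewrite big_bind; apply: eq_bigr => xl _; rewrite big_bind; apply: eq_bigr => l _.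
rewrite big_bind; apply: eq_bigr => th _; rewrite big_bind; apply: eq_bigr => r _.
by rewrite big_map.
Qed.

Lemma smash_kernel_twist a1 a2 b l th r c h1 h2 :
  smash_kernel (twist_mul mA actL actR F Fi) a1 a2 b l th r c h1 h2 =
  \sum_(gg <- Fi) \sum_(ff <- F) smash_kernel mA (mH gg.1 a1) (mH gg.2 a2)
    (mB eB b) l th r (mB c eB) (mH h1 ff.1) (mH h2 ff.2).
Proof.
rewrite /smash_kernel /twist_mul islin_sum // mulr_suml; apply: eq_bigr => gg _.
rewrite islin_sum // mulr_suml; apply: eq_bigr => ff _.
by rewrite uBl uBr !act_comm -!actL_mul -!actR_mul !aH.
Qed.

Ltac solve_linear := repeat first
  [ done | apply: islin_mulr | apply: islin_mull
  | apply: (islin_comp hf) | apply: (islin_comp hg)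
  | apply: (linear_bilinear_l _ bA) | apply: (linear_bilinear_r _ bA)
  | apply: (linear_bilinear_l _ bB) | apply: (linear_bilinear_r _ bB)
  | apply: (linear_bilinear_l _ bH) | apply: (linear_bilinear_r _ bH)
  | apply: (linear_bilinear_l _ bL) | apply: (linear_bilinear_r _ bL)
  | apply: (linear_bilinear_l _ bR) | apply: (linear_bilinear_r _ bR) ].

Lemma smash_kernel_trilinear_l l th r c h1 h2 :
  trilinear (fun a1 a2 b => smash_kernel mA a1 a2 b l th r c h1 h2).
Proof. by split=> *; rewrite /smash_kernel; solve_linear. Qed.

Lemma smash_kernel_trilinear_r a1 a2 b l th r :
  trilinear (smash_kernel mA a1 a2 b l th r).
Proof. by split=> *; rewrite /smash_kernel; solve_linear. Qed.

Lemma smash1_gauge :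
  \sum_(p <- smash1 mH mB actL actR lam rho Plri mA Pli Pri phi u psi u')
     f p.1 * g p.2 =
  \sum_(p <- smash1 mH mB actL actR lam rho Plri (twist_mul mA actL actR F Fi)
                   PlFi PrFi phi u psi u') f p.1 * g p.2.
Proof.
rewrite !smash1_pair3 (teq3_trilinear PliE); last first.
  do 3 apply: trilinear_sum => ?; apply: trilinear_sum => ?.
  exact: smash_kernel_trilinear_l.
rewrite pair3_mul3 pair3_lift2_r /= exchange_big; apply: eq_bigr => y _.
rewrite exchange_big; apply: eq_bigr => l _; rewrite exchange_big.
apply: eq_bigr => th _; rewrite exchange_big; apply: eq_bigr => r _.
under eq_bigr do
  rewrite -(teq3_trilinear PriE (smash_kernel_trilinear_r _ _ _ _ _ _)) pair3_mul3.
rewrite /pair3 exchange_big; apply: eq_bigr => xr _.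
by rewrite smash_kernel_twist; apply: eq_bigr => gg _; rewrite big_map.
Qed.

End SmashGauge.

Theorem proposition2p10 (k : fieldType)
  (H : lmodType k) (mH : H -> H -> H) (eH : H) (D : H -> seq (H * H))
  (eps : H -> k) (Phi Phii : seq (H * H * H))
  (A : lmodType k) (mA : A -> A -> A) (eA : A)
  (actL : H -> A -> A) (actR : A -> H -> A)
  (B : lmodType k) (mB : B -> B -> B) (eB : B)
  (lam : B -> seq (H * B)) (rho : B -> seq (B * H))
  (Pl Pli : seq (H * H * B)) (Pr Pri : seq (B * H * H))
  (Plr Plri : seq (H * B * H))
  (F Fi : seq (H * H))
  (PlFi : seq (H * H * B)) (PrFi : seq (B * H * H)) :
  quasi_bialgebra mH eH D eps Phi Phii ->
  bimodule_algebra mH eH D eps Phi Phii mA eA actL actR ->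
  bicomodule_algebra mH eH D eps Phi mB eB lam rho Pl Pli Pr Pri Plr Plri ->
  gauge_transformation mH eH eps F Fi ->
  (* PlFi is the inverse of the new reassociator Phi_lambda (F^-1 (x) 1) *)
  teq3 (mul3 mH mH mB (mul3 mH mH mB Pl (lift2_r eB Fi)) PlFi) [:: (eH, eH, eB)] ->
  teq3 (mul3 mH mH mB PlFi (mul3 mH mH mB Pl (lift2_r eB Fi))) [:: (eH, eH, eB)] ->
  (* PrFi is the inverse of the new reassociator (1 (x) F) Phi_rho *)
  teq3 (mul3 mB mH mH (mul3 mB mH mH (lift2_l eB F) Pr) PrFi) [:: (eB, eH, eH)] ->
  teq3 (mul3 mB mH mH PrFi (mul3 mB mH mH (lift2_l eB F) Pr)) [:: (eB, eH, eH)] ->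
  forall s t : seq (A * B),
    teq2 (smash mH mB actL actR lam rho Plri mA Pli Pri s t)
         (smash mH mB actL actR lam rho Plri (twist_mul mA actL actR F Fi)
                PlFi PrFi s t).
Proof.
(* One-sided inverses suffice, and nothing about F itself is used. *)
move=> qb ba bc _ PlFi_r _ _ PrFi_l s t.
have algH := qb_alg qb; have algB := bc_alg bc.
have [[bH _ _] aH] := algH; have [[bB uBl uBr] _] := algB.
have [bA _ _] := ba_unital ba.
have PliE : teq3 Pli (mul3 mH mH mB (lift2_r eB Fi) PlFi).
  apply: (teq3_inv_unique algH algH algB (bc_Pl_inv_l bc)).
  by rewrite -(mul3A algH algH algB).
have PriE : teq3 (mul3 mB mH mH PrFi (lift2_l eB F)) Pri.
  apply: (teq3_inv_unique algB algH algH _ (bc_Pr_inv_r bc)).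
  by rewrite (mul3A algB algH algH).
apply: teq2_bind => p; apply: teq2_bind => q f g hf hg.
apply: (smash1_gauge _ _ _ bH bA bB _ _ aH uBl uBr _ _ _ PliE PriE) => //.
- exact: ba_actL_bil ba.
- exact: ba_actR_bil ba.
- exact: ba_actL_mul ba.
- exact: ba_actR_mul ba.
- exact: ba_act_comm ba.
Qed.
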